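(* Let $m\ge3$, $C$ a set of $m$ candidates, $T$ the set of all $m!$ strict rankings of $C$, $w=(w_1,\dots,w_m)$ with $1=w_1\ge\cdots\ge w_m=0$, $\bar w=(w_1+\cdots+w_m)/m$, and $\sigma_t(\alpha)=w_i$ where $i$ is the position of $\alpha$ in $t\in T$. Let $(N_t)_{t\in T}$ be nonnegative integers with $\sum_tN_t=n$ and $|\alpha|=\sum_tN_t\sigma_t(\alpha)$. Suppose $|a|>|\alpha|$ for all $\alpha\ne a$, and $b\ne a$ satisfies $|b|\ge|\alpha|$ for all $\alpha\ne a$. Let $T_b$ be the set of types ranking $b$ first, $T_i$ ($1\le i\le m-1$) the set of types ranking $b$ in position $i$ and $a$ in position $i+1$, and $T_{ba}=\bigcup_iT_i$. Consider the linear programs (P2): $\min\sum_{t\in T_{ba}}x_t$ s.t. $\sum_{t\in T_b}y_t(1-\sigma_t(\alpha))-\sum_{t\in T_{ba}}x_t(\sigma_t(b)-\sigma_t(\alpha))\ge|\alpha|-|b|$ for all $\alpha\ne b$, $\sum_{t\in T_b}y_t=\sum_{t\in T_{ba}}x_t$, $x_t\ge0$, $y_t\ge0$; (P4): $\min\sum_{i=1}^{m-1}z_i$ s.t. $\sum_{i=1}^{m-1}(1-w_i+w_{i+1})z_i\ge|a|-|b|$, $\sum_{i=1}^{m-1}(1-w_i)z_i\ge n\bar w-|b|$, $z_i\ge0$; (P5): $\max\ (|a|-n\bar w)\lambda+(n\bar w-|b|)\mu$ s.t. $w_{i+1}\lambda+(1-w_i)\mu\le1$ for $i=1,\dots,m-1$,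 and $0\le\lambda\le\mu$. Then (P2) and (P4) have the same optimal value as (P5). Moreover, (P5) is unbounded if and only if (P2) and (P4) are infeasible. *)

From HB Require Import structures.
From mathcomp Require Import all_boot all_order all_algebra all_fingroup.
From mathcomp Require Import all_classical all_reals ereal.
Set Implicit Arguments. Unset Strict Implicit. Unset Printing Implicit Defensive.
Import Order.TTheory GRing.Theory Num.Theory.
Local Open Scope ring_scope.
Local Open Scope classical_set_scope.

(* Types (strict rankings): t : {perm 'I_m}, where
   t c (a nat in 0..m-1) is the 0-indexed position of candidate c in t.
   Weights: w : nat -> R, with w i (0-indexed) standing for the paper's w_{i+1}. *)

Section Voting.
Variables (R : realType) (m : nat) (w : nat -> R) (N : {perm 'I_m} -> nat)
  (a b : 'I_m).

Definition sigma (t : {perm 'I_m}) (c : 'I_m) : R := w (t c).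

Definition nvoters : nat := \sum_(t : {perm 'I_m}) N t.

Definition score (c : 'I_m) : R := \sum_(t : {perm 'I_m}) (N t)%:R * sigma t c.

Definition wbar : R := (\sum_(i < m) w i) / m%:R.

Definition Tb : pred {perm 'I_m} := fun t => (t b : nat) == 0%N.

Definition Tba : pred {perm 'I_m} := fun t => (t a : nat) == (t b).+1.

Definition P2_feasible (p : ({perm 'I_m} -> R) * ({perm 'I_m} -> R)) : Prop :=
  let x := p.1 in let y := p.2 in
  [/\ (forall c : 'I_m, c != b ->
        \sum_(t in Tb) y t * (1 - sigma t c)
        - \sum_(t in Tba) x t * (sigma t b - sigma t c) >= score c - score b),
      \sum_(t in Tb) y t = \sum_(t in Tba) x t,
      (forall t, t \in Tba -> 0 <= x t) &
      (forall t, t \in Tb -> 0 <= y t)].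

Definition P2_obj (p : ({perm 'I_m} -> R) * ({perm 'I_m} -> R)) : R :=
  \sum_(t in Tba) p.1 t.

(* optimal value of a minimization: inf over the feasible set (+oo if infeasible) *)
Definition P2_value : \bar R :=
  ereal_inf [set (P2_obj p)%:E | p in P2_feasible].

(* (P4): variables z_1..z_{m-1}, here z : 'I_(m.-1) -> R, z i = paper's z_{i+1} *)
Definition P4_feasible (z : 'I_(m.-1) -> R) : Prop :=
  [/\ \sum_(i < m.-1) (1 - w i + w i.+1) * z i >= score a - score b,
      \sum_(i < m.-1) (1 - w i) * z i >= nvoters%:R * wbar - score b &
      (forall i, 0 <= z i)].

Definition P4_obj (z : 'I_(m.-1) -> R) : R := \sum_(i < m.-1) z i.

Definition P4_value : \bar R :=
  ereal_inf [set (P4_obj z)%:E | z in P4_feasible].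

Definition P5_feasible (p : R * R) : Prop :=
  [/\ (forall i : nat, (i < m.-1)%N -> w i.+1 * p.1 + (1 - w i) * p.2 <= 1),
      0 <= p.1 & p.1 <= p.2].

Definition P5_obj (p : R * R) : R :=
  (score a - nvoters%:R * wbar) * p.1 + (nvoters%:R * wbar - score b) * p.2.

Definition P5_value : \bar R :=
  ereal_sup [set (P5_obj p)%:E | p in P5_feasible].

Definition P5_unbounded : Prop :=
  forall M : R, exists p, P5_feasible p /\ M < P5_obj p.

End Voting.

From HB Require Import structures.
From mathcomp Require Import all_boot all_order all_algebra all_fingroup.
From mathcomp Require Import all_classical all_reals ereal.
From mathcomp Require Import ring lra zify.
Import Order.TTheory GRing.Theory Num.Theory.
Set Implicit Arguments. Unset Strict Implicit. Unset Printing Implicit Defensive.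
Local Open Scope ring_scope.

(* Aggregating the [x_t] of (P2) over each [T_i] gives a point of (P4) with
   the same cost, and weak duality from (P4) to (P5) is a direct estimate, so
   (P2) >= (P4) >= (P5).  Conversely, if (P5) is bounded by [V] but (P2) has no
   point of cost [<= V], Farkas' lemma (proved by Fourier-Motzkin elimination)
   gives a dual certificate [(pi, nu, q)].  With [theta] the least [pi_c],
   [c != b], the pair [(pi_a - theta, pi_a + (m - 1) theta)] satisfies the
   constraints of (P5) scaled by [q]: for each [i], test the certificate on a
   ranking with [b, a] at positions [i, i + 1] and on the same ranking with [b]
   moved to the top and [a] to the bottom.  Its objective exceeds [q V], which
   contradicts the homogeneity of (P5).  When (P5) is unbounded, weak duality
   leaves (P2) and (P4) infeasible. *)

Lemma sum_kronecker (R : ringType) (T : finType) (F : T -> R) (j : T) :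
  \sum_i (i == j)%:R * F i = F j.
Proof.
by rewrite (bigD1 j) //= eqxx mul1r big1 ?addr0 // => i /negbTE ->; rewrite mul0r.
Qed.

Lemma sum_option (R : nmodType) (J : finType) (F : option J -> R) :
  \sum_o F o = F None + \sum_j F (Some j).
Proof.
rewrite (bigD1 None) //=; congr (_ + _).
by rewrite (reindex_omap Some (fun o => o)) => [|[]] //; apply: eq_bigl => j; rewrite eqxx.
Qed.

Section Farkas.
Variable R : realFieldType.

Lemma exists_between (I : finType) (P Q : pred I) (L U : I -> R) :
  (forall p q, P p -> Q q -> L p <= U q) ->
  exists z, (forall p, P p -> L p <= z) /\ (forall q, Q q -> z <= U q).
Proof.
move=> LU; case: (pickP P) => [p0 Pp0|noP]; last first.
  exists (\big[Order.min/0]_(q | Q q) U q); split=> [p|q Qq]; first by rewrite noP.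
  by rewrite (bigD1 q) //= ge_min lexx.
exists (\big[Order.max/L p0]_(p | P p) L p); split=> [p Pp|q Qq].
  by rewrite (bigD1 p) //= le_max lexx.
apply: (big_ind (fun x => x <= U q)) => [|x y|p Pp]; rewrite ?ge_max; last exact: LU.
  exact: LU.
by move=> -> ->.
Qed.

Section FourierMotzkin.
Variables (I : finType) (c : I -> R).

(* Row [k] of the system obtained by eliminating a variable with coefficients
   [c] is [\sum_i fm_weight k i * row i]: the rows where [c] vanishes, and
   [- c q * row p + c p * row q] for [c p > 0 > c q]. *)
Definition fm_weight (k : I + I * I) (i : I) : R :=
  match k with
  | inl i' => (i == i')%:R * (c i' == 0)%:R
  | inr (p, q) => ((0 < c p) && (c q < 0))%:R * ((i == p)%:R * - c q + (i == q)%:R * c p)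
  end.

Lemma fm_weight_ge0 k i : 0 <= fm_weight k i.
Proof.
case: k => [i'|[p q]] /=; first by rewrite mulr_ge0.
case: andP => [[cp cq]|_]; last by rewrite mul0r.
by rewrite mul1r addr_ge0 // mulr_ge0 // ?oppr_ge0 ltW.
Qed.

Lemma fm_weight_sum (F : I -> R) k : \sum_i fm_weight k i * F i =
  match k with
  | inl i => (c i == 0)%:R * F i
  | inr (p, q) => ((0 < c p) && (c q < 0))%:R * (- c q * F p + c p * F q)
  end.
Proof.
case: k => [i'|[p q]] /=.
  rewrite -(sum_kronecker (fun i => (c i' == 0)%:R * F i)).
  by apply: eq_bigr => i _; ring.
set b := (_ && _)%:R.
transitivity (\sum_i (b * - c q * ((i == p)%:R * F i) + b * c p * ((i == q)%:R * F i))).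
  by apply: eq_bigr => i _; ring.
by rewrite big_split -!mulr_sumr !sum_kronecker /=; ring.
Qed.

Lemma fm_weight_column k : \sum_i fm_weight k i * c i = 0.
Proof.
rewrite fm_weight_sum; case: k => [i|[p q]].
  by case: eqP => [->|]; rewrite ?mulr0 ?mul0r.
by rewrite [c p * _]mulrC mulNr addNr mulr0.
Qed.

Lemma fm_solve_column (d : I -> R) :
  (forall k, \sum_i fm_weight k i * d i <= 0) -> exists z, forall i, d i <= c i * z.
Proof.
move=> hd.
have [|z [zl zu]] := @exists_between _ (fun p => 0 < c p) (fun q => c q < 0)
    (fun p => d p / c p) (fun q => d q / c q).
  move=> p q /= cp cq; have := hd (inr (p, q)); rewrite fm_weight_sum cp cq mul1r => h.
  rewrite ler_pdivrMr // mulrAC ler_ndivlMr //; nra.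
exists z => i; case: (ltgtP (c i) 0) => ci.
- by have := zu i ci; rewrite /= ler_ndivlMr // mulrC.
- by have := zl i ci; rewrite /= ler_pdivrMr // mulrC.
- by have := hd (inl i); rewrite fm_weight_sum ci eqxx mul1r mul0r.
Qed.
End FourierMotzkin.

Lemma sum_comb (I K : finType) (P : pred I) (p : K -> R) (W : K -> I -> R) (F : I -> R) :
  \sum_(i | P i) (\sum_k p k * W k i) * F i = \sum_k p k * \sum_(i | P i) W k i * F i.
Proof.
under eq_bigr do rewrite mulr_suml; rewrite exchange_big /=.
by apply: eq_bigr => k _; rewrite mulr_sumr; apply: eq_bigr => i _; rewrite mulrA.
Qed.

Lemma farkas_on (J : finType) (A : {set J}) (I : finType) (M : I -> J -> R) (r : I -> R) :
  (exists x : J -> R, forall i, r i <= \sum_(j in A) M i j * x j) \/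
  (exists p : I -> R, [/\ forall i, 0 <= p i,
     forall j, j \in A -> \sum_i p i * M i j = 0 & 0 < \sum_i p i * r i]).
Proof.
move cardA: #|A| => n; elim: n A cardA I M r => [|n IH] A cardA I M r.
  move/eqP: cardA; rewrite cards_eq0 => /eqP ->.
  have [r_le0|] := boolP [forall i, r i <= 0].
    by left; exists (fun=> 0) => i; rewrite big_set0; exact: (forallP r_le0).
  rewrite negb_forall => /existsP[i0]; rewrite -ltNge => r_i0.
  right; exists (fun i => (i == i0)%:R); split=> [i|j|]; rewrite ?inE ?sum_kronecker //.
have [j0 j0A] : exists j0, j0 \in A.
  by apply/set0Pn; rewrite -card_gt0 cardA.
have cardA' : #|A :\ j0| = n by move: cardA; rewrite (cardsD1 j0) j0A add1n => -[].
pose c i := M i j0; pose W := fm_weight c.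
have [[x' hx']|[p' [p'_ge0 p'M p'r]]] :=
  IH _ cardA' _ (fun k j => \sum_i W k i * M i j) (fun k => \sum_i W k i * r i).
  pose s i := \sum_(j in A :\ j0) M i j * x' j.
  have [|z hz] := @fm_solve_column _ c (fun i => r i - s i).
    move=> k; under eq_bigr do rewrite mulrBr.
    by rewrite sumrB subr_le0 /s -sum_comb; exact: hx'.
  left; exists (fun j => if j == j0 then z else x' j) => i.
  rewrite (bigD1 j0) //= eqxx.
  rewrite (eq_bigl (mem (A :\ j0))) => [|j]; last by rewrite /= in_setD1 andbC.
  rewrite (eq_bigr (fun j => M i j * x' j)) => [|j /setD1P[/negbTE -> _] //].
  by have := hz i; rewrite /c mulrC -/(s i); lra.
right; exists (fun i => \sum_k p' k * W k i); split.
- by move=> i; apply: sumr_ge0 => k _; rewrite mulr_ge0 ?fm_weight_ge0.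
- move=> j jA; rewrite sum_comb; have [->|j_neq] := eqVneq j j0.
    by rewrite big1 // => k _; rewrite fm_weight_column mulr0.
  by apply: p'M; rewrite in_setD1 j_neq.
- by rewrite sum_comb.
Qed.

Lemma farkas (I J : finType) (M : I -> J -> R) (r : I -> R) :
  (exists x : J -> R, forall i, r i <= \sum_j M i j * x j) \/
  (exists p : I -> R, [/\ forall i, 0 <= p i,
     forall j, \sum_i p i * M i j = 0 & 0 < \sum_i p i * r i]).
Proof.
have sumT (F : J -> R) : \sum_(j in [set: J]) F j = \sum_j F j.
  by apply: eq_bigl => j; rewrite inE.
have [[x hx]|[p [p_ge0 pM pr]]] := farkas_on [set: J] M r.
  by left; exists x => i; rewrite -sumT.
by right; exists p; split=> // j; apply: pM; rewrite inE.
Qed.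

Lemma farkas_lp (I J : finType) (M : I -> J -> R) (r : I -> R) (c : J -> R) (V : R) :
  (exists x : J -> R, [/\ forall j, 0 <= x j,
     forall i, r i <= \sum_j M i j * x j & \sum_j c j * x j <= V]) \/
  (exists (p : I -> R) (q : R), [/\ forall i, 0 <= p i, 0 <= q,
     forall j, \sum_i p i * M i j <= q * c j & q * V < \sum_i p i * r i]).
Proof.
pose M' (k : I + option J) j := match k with
  | inl i => M i j | inr None => - c j | inr (Some j') => (j == j')%:R end.
pose r' (k : I + option J) := match k with
  | inl i => r i | inr None => - V | inr (Some _) => 0 end.
have [[x hx]|[p [p_ge0 pM pr]]] := farkas M' r'.
  left; exists x; split=> [j|i|].
  - by have := hx (inr (Some j)); rewrite /= sum_kronecker.
  - exact: hx (inl i).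
  - by have := hx (inr None); under eq_bigr do rewrite mulNr; rewrite sumrN lerN2.
right; exists (fun i => p (inl i)), (p (inr None)); split=> [i||j|].
- exact: p_ge0.
- exact: p_ge0.
- have := pM j; rewrite big_sumType sum_option /=.
  under [X in _ + (_ + X)]eq_bigr do rewrite mulrC eq_sym.
  rewrite sum_kronecker mulrN; have := p_ge0 (inr (Some j)); lra.
- have := pr; rewrite big_sumType sum_option /=.
  under [X in _ + (_ + X)]eq_bigr do rewrite mulr0; rewrite big1_eq.
  lra.
Qed.
End Farkas.

Section LinearProgramValues.
Local Open Scope classical_set_scope.
Variables (R : realType) (T U : Type) (P : set T) (Q : set U) (f : T -> R) (g : U -> R).
Local Notation inf := (ereal_inf [set (f p)%:E | p in P]).
Local Notation sup := (ereal_sup [set (g q)%:E | q in Q]).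

Lemma ereal_sup_real : (exists q, Q q) -> ~ (forall M, exists q, Q q /\ M < g q) ->
  exists v : R, sup = v%:E /\ forall q, Q q -> g q <= v.
Proof.
move=> [q0 Qq0] bdd.
have [V le_V] : exists V, forall q, Q q -> g q <= V.
  apply: contra_notP bdd => noV M; apply: contra_notP noV => noq.
  by exists M => q Qq; rewrite leNgt; apply/negP => lt; apply: noq; exists q.
have sup_ge : ((g q0)%:E <= sup)%E by apply: ereal_sup_ubound; exists q0.
have sup_le : (sup <= V%:E)%E by apply: ge_ereal_sup => _ [q Qq <-]; rewrite lee_fin le_V.
case sup_v : sup sup_ge sup_le => [v| |] // _ _; exists v; split=> // q Qq.
by rewrite -lee_fin -sup_v; apply: ereal_sup_ubound; exists q.
Qed.

Hypothesis weak_duality : forall p q, P p -> Q q -> g q <= f p.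

Lemma ereal_sup_le_inf : (sup <= inf)%E.
Proof.
apply: le_ereal_inf_tmp => _ [p Pp <-]; apply: ge_ereal_sup => _ [q Qq <-].
by rewrite lee_fin weak_duality.
Qed.

Lemma ereal_inf_eq_sup_attained (v : R) :
  sup = v%:E -> (exists2 p, P p & f p <= v) -> inf = sup.
Proof.
move=> sup_v [p Pp fp_le]; apply/eqP; rewrite eq_le ereal_sup_le_inf andbT sup_v.
by apply: ge_ereal_inf; exists (f p)%:E; [exists p | rewrite lee_fin].
Qed.

Lemma ereal_inf_eq_sup_unbounded : (forall M, exists q, Q q /\ M < g q) ->
  ~ (exists p, P p) /\ inf = sup.
Proof.
move=> unb; have noP : ~ exists p, P p.
  by move=> [p Pp]; have [q [Qq]] := unb (f p); rewrite ltNge weak_duality.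
split=> //; have -> : [set (f p)%:E | p in P] = set0.
  by apply/seteqP; split=> // y [p Pp _]; apply: noP; exists p.
rewrite ereal_inf0; symmetry; apply/eqyP => M _; have [q [Qq lt]] := unb M.
by apply: le_ereal_sup_tmp; exists (g q)%:E; [exists q | rewrite lee_fin ltW].
Qed.
End LinearProgramValues.

Lemma perm_update (T : finType) (t : {perm T}) (u q : T) :
  exists t' : {perm T}, t' u = q /\ forall v, v != u -> t v != q -> t' v = t v.
Proof.
exists (t * tperm (t u) q)%g; split=> [|v vu tvq]; first by rewrite permM tpermL.
by rewrite permM tpermD // eq_sym ?(inj_eq perm_inj).
Qed.

Lemma perm_exists2 (T : finType) (u1 u2 q1 q2 : T) : u1 != u2 -> q1 != q2 ->
  exists t : {perm T}, t u1 = q1 /\ t u2 = q2.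
Proof.
move=> u12 q12; have [t1 [t1u1 _]] := perm_update 1%g u1 q1.
have [t2 [t2u2 t2D]] := perm_update t1 u2 q2.
by exists t2; split=> //; rewrite t2D // t1u1.
Qed.

Lemma perm_exists3 (T : finType) (u1 u2 u3 q1 q2 q3 : T) :
  u1 != u2 -> u1 != u3 -> u2 != u3 -> q1 != q2 -> q1 != q3 -> q2 != q3 ->
  exists t : {perm T}, [/\ t u1 = q1, t u2 = q2 & t u3 = q3].
Proof.
move=> u12 u13 u23 q12 q13 q23; have [t [tu1 tu2]] := perm_exists2 u12 q12.
have [t' [t'u3 t'D]] := perm_update t u3 q3.
by exists t'; split=> //; rewrite t'D 1?eq_sym // ?tu1 ?tu2 // eq_sym.
Qed.

Lemma ranking_pair (m : nat) (a b c0 : 'I_m) (i : nat) :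
  a != b -> c0 != b -> (i.+1 < m)%N ->
  exists tx ty : {perm 'I_m}, [/\ (tx b : nat) = i, (tx a : nat) = i.+1,
    (ty b : nat) = 0%N, (c0 != a -> (ty a : nat) = m.-1) &
    forall c, c != a -> c != b -> c != c0 -> ty c = tx c \/ (tx c : nat) = 0%N].
Proof.
move=> ab c0b im.
have m_gt0 : (0 < m)%N by lia.
pose q0 := Ordinal m_gt0; pose qi := Ordinal (ltnW im); pose qi1 := Ordinal im.
have [c0a|c0a] := eqVneq c0 a.
  have [tx [txb txa]] : exists tx : {perm 'I_m}, tx b = qi /\ tx a = qi1.
    by apply: perm_exists2; rewrite 1?eq_sym // -val_eqE /=; lia.
  exists tx, (tx * tperm q0 qi)%g; split; rewrite ?txb ?txa ?permM ?txb ?tpermR //.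
  move=> c ca cb _; have [->|c_0] := eqVneq (tx c) q0; first by right.
  by left; rewrite permM tpermD 1?eq_sym // -txb (inj_eq perm_inj).
have m_gt2 : (2 < m)%N.
  have /card_uniqP abc0 : uniq [:: a; b; c0].
    by rewrite /= !inE negb_or ab !(eq_sym _ c0) c0a c0b.
  by have := max_card (mem [:: a; b; c0]); rewrite abc0 card_ord.
have mm : (m.-1 < m)%N by lia.
pose qm := Ordinal mm; pose qs := if i.+2 == m then q0 else qm.
have [tx [txb txa txc0]] :
    exists tx : {perm 'I_m}, [/\ tx b = qi, tx a = qi1 & tx c0 = qs].
  apply: perm_exists3; rewrite 1?eq_sym // /qs;
    by try case: ifP => /eqP; rewrite -val_eqE /=; lia.
have tx_qm c : c != a -> c != c0 -> tx c != qm.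
  move=> ca cc0; have : tx c != tx a by rewrite (inj_eq perm_inj).
  have : tx c != tx c0 by rewrite (inj_eq perm_inj).
  by rewrite txa txc0 /qs; case: ifP => /eqP; rewrite -!val_eqE /=; lia.
exists tx, (tx * (tperm qi1 qm * tperm q0 qi))%g; split; rewrite ?txb ?txa //.
- by rewrite !permM txb (tpermD (x := qi1)) ?tpermR //; rewrite -val_eqE /=; lia.
- by move=> _; rewrite !permM txa tpermL tpermD //; rewrite -val_eqE /=; lia.
move=> c ca cb cc0; have [->|c_0] := eqVneq (tx c) q0; first by right.
have txc_i : tx c != qi by rewrite -txb (inj_eq perm_inj).
have txc_i1 : tx c != qi1 by rewrite -txa (inj_eq perm_inj).
by left; rewrite !permM (tpermD (x := qi1)) ?tpermD //; rewrite eq_sym ?tx_qm.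
Qed.

Lemma sum_mulr_if (R : ringType) (T : finType) (P : pred T) (F G : T -> R) :
  \sum_t F t * (if P t then G t else 0) = \sum_(t | P t) F t * G t.
Proof. by rewrite [RHS]big_mkcond; apply: eq_bigr => t _; case: ifP; rewrite ?mulr0. Qed.

Lemma sum_if_mulr (R : ringType) (T : finType) (P : pred T) (F G : T -> R) :
  \sum_t (if P t then G t else 0) * F t = \sum_(t | P t) G t * F t.
Proof. by rewrite [RHS]big_mkcond; apply: eq_bigr => t _; case: ifP; rewrite ?mul0r. Qed.

Section Voting.
Variables (R : realType) (m : nat) (w : nat -> R) (N : {perm 'I_m} -> nat) (a b : 'I_m).
Hypotheses (w0 : w 0%N = 1) (w_last : w m.-1 = 0)
  (w_nonincr : forall i j : nat, (i <= j)%N -> (j < m)%N -> w j <= w i)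
  (ba : b != a) (b_second : forall c : 'I_m, c != a -> score w N c <= score w N b).

Local Notation sc := (score w N).
Local Notation sg := (sigma w).
Local Notation nwbar := ((nvoters N)%:R * wbar m w).

Lemma m_gt0 : (0 < m)%N.
Proof. exact: leq_ltn_trans (leq0n b) (ltn_ord b). Qed.

Lemma w_ge0 i : (i < m)%N -> 0 <= w i.
Proof. by move=> im; rewrite -w_last w_nonincr // -ltnS prednK ?m_gt0. Qed.

Lemma w_le1 i : (i < m)%N -> w i <= 1.
Proof. by move=> im; rewrite -w0 w_nonincr. Qed.

Lemma sum_sigma (t : {perm 'I_m}) : \sum_c sg t c = \sum_(i < m) w i.
Proof. by rewrite [RHS](reindex_inj (@perm_inj _ t)). Qed.

Lemma sigma_ge0 (t : {perm 'I_m}) c : 0 <= sg t c.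
Proof. exact: w_ge0. Qed.

Lemma sigma_Tb (t : {perm 'I_m}) : t \in Tb b -> sg t b = 1.
Proof. by rewrite /sigma => /eqP ->. Qed.

Lemma Tba_pos (t : {perm 'I_m}) : t \in Tba a b -> (t a : nat) = (t b).+1 /\ (t b < m.-1)%N.
Proof. by move=> /eqP tab; split=> //; have := ltn_ord (t a); rewrite tab; lia. Qed.

Lemma sum_neq_b (F : 'I_m -> R) : F b = 0 -> \sum_(c | c != b) F c = \sum_c F c.
Proof. by move=> Fb; rewrite [RHS](bigD1 b) //= Fb add0r. Qed.

Lemma sum_score_gap : \sum_(c | c != b) (sc c - sc b) = m%:R * (nwbar - sc b).
Proof.
have sum_score : \sum_c sc c = (nvoters N)%:R * \sum_(i < m) w i.
  rewrite /score exchange_big /= /nvoters natr_sum mulr_suml.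
  by apply: eq_bigr => t _; rewrite -mulr_sumr sum_sigma.
have m_neq0 : (m%:R : R) != 0 by rewrite pnatr_eq0 -lt0n m_gt0.
rewrite sum_neq_b ?subrr //.
by rewrite sumrB sum_score sumr_const card_ord -mulr_natl /wbar; field.
Qed.

Lemma P5_obj_le_P4_obj (z : 'I_(m.-1) -> R) (q : R * R) :
  P4_feasible w N a b z -> P5_feasible m w q -> P5_obj w N a b q <= P4_obj z.
Proof.
case: q => l u [gap_a gap_mean z_ge0] [/= q_le1 l_ge0 lu].
have -> : P5_obj w N a b (l, u) = l * (sc a - sc b) + (u - l) * (nwbar - sc b).
  by rewrite /P5_obj /=; ring.
rewrite (le_trans (lerD (ler_wpM2l l_ge0 gap_a) (ler_wpM2l _ gap_mean))) ?subr_ge0 //.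
rewrite !mulr_sumr -big_split /P4_obj /=; apply: ler_sum => i _.
have := q_le1 i (ltn_ord i); have := z_ge0 i; nra.
Qed.

Definition P4_of_P2 (x : {perm 'I_m} -> R) (i : 'I_(m.-1)) : R :=
  \sum_(t in Tba a b | (t b : nat) == i) x t.

Lemma sum_P4_of_P2 (F : nat -> R) (x : {perm 'I_m} -> R) :
  \sum_(i < m.-1) F i * P4_of_P2 x i = \sum_(t in Tba a b) F (t b) * x t.
Proof.
under eq_bigr do rewrite mulr_sumr.
rewrite (exchange_big_dep (mem (Tba a b))) => [|i t _ /andP[] //] /=; apply: eq_bigr => t tT.
rewrite (eq_bigl (fun i : 'I_(m.-1) => (i : nat) == t b)) => [|i]; last by rewrite tT eq_sym.
by rewrite (big_ord1_eq _ (fun k => F k * x t)) (Tba_pos tT).2.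
Qed.

Lemma P2_gap_a (x y : {perm 'I_m} -> R) : P2_feasible w N a b (x, y) ->
  sc a - sc b <= \sum_(t in Tba a b) (1 - w (t b) + w (t b).+1) * x t.
Proof.
case=> /= /(_ a) row_a y_eq _ y_ge0.
have y_le : \sum_(t in Tb b) y t * (1 - sg t a) <= \sum_(t in Tba a b) x t.
  rewrite -y_eq; apply: ler_sum => t tT.
  by rewrite ler_piMr ?y_ge0 // gerBl sigma_ge0.
have -> : \sum_(t in Tba a b) (1 - w (t b) + w (t b).+1) * x t =
    \sum_(t in Tba a b) x t - \sum_(t in Tba a b) x t * (sg t b - sg t a).
  by rewrite -sumrB; apply: eq_bigr => t tT; rewrite /sigma (Tba_pos tT).1; ring.
by move: row_a; rewrite eq_sym ba => /(_ isT); lra.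
Qed.

Lemma P2_gap_mean (x y : {perm 'I_m} -> R) : P2_feasible w N a b (x, y) ->
  nwbar - sc b <= \sum_(t in Tba a b) (1 - sg t b) * x t.
Proof.
case=> /= rows y_eq _ _.
have m_pos : (0 : R) < m%:R by rewrite ltr0n m_gt0.
rewrite -(ler_pM2l m_pos) -sum_score_gap.
rewrite (le_trans (ler_sum _ rows)) // sumrB.
rewrite [X in X - _]exchange_big [X in _ - X]exchange_big /=.
have -> : \sum_(t in Tb b) \sum_(c | c != b) y t * (1 - sg t c) =
    (m%:R - \sum_(i < m) w i) * \sum_(t in Tba a b) x t.
  rewrite -y_eq mulr_sumr; apply: eq_bigr => t tT.
  rewrite -mulr_sumr sum_neq_b ?sigma_Tb ?subrr ?mulr0 //.
  by rewrite sumrB sumr_const card_ord sum_sigma -mulr_natl mulr1 mulrC.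
rewrite mulr_sumr mulr_sumr -sumrB; apply: ler_sum => t _.
rewrite -mulr_sumr sum_neq_b ?subrr // sumrB sumr_const card_ord sum_sigma.
rewrite -mulr_natl; lra.
Qed.

Lemma P2_to_P4 (p : ({perm 'I_m} -> R) * ({perm 'I_m} -> R)) : P2_feasible w N a b p ->
  P4_feasible w N a b (P4_of_P2 p.1) /\ P4_obj (P4_of_P2 p.1) = P2_obj a b p.
Proof.
case: p => x y feas /=; have [_ _ x_ge0 _] := feas.
split; last first.
  have := sum_P4_of_P2 (fun=> 1) x; rewrite /P4_obj /P2_obj /=.
  by under eq_bigr do rewrite mul1r; under [X in _ = X -> _]eq_bigr do rewrite mul1r.
split=> [||i]; last by apply: sumr_ge0 => t /andP[/x_ge0].
  by rewrite (sum_P4_of_P2 (fun i => 1 - w i + w i.+1)); exact: P2_gap_a feas.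
by rewrite (sum_P4_of_P2 (fun i => 1 - w i)); exact: P2_gap_mean feas.
Qed.

Lemma P5_obj_le_P2_obj (p : ({perm 'I_m} -> R) * ({perm 'I_m} -> R)) (q : R * R) :
  P2_feasible w N a b p -> P5_feasible m w q -> P5_obj w N a b q <= P2_obj a b p.
Proof.
by move=> /P2_to_P4[feas4 <-]; exact: P5_obj_le_P4_obj.
Qed.

Lemma P5_obj_le_homogeneous (V : R) :
  (forall q, P5_feasible m w q -> P5_obj w N a b q <= V) ->
  forall l u s, 0 <= s -> 0 <= l -> l <= u ->
  (forall i, (i < m.-1)%N -> w i.+1 * l + (1 - w i) * u <= s) ->
  P5_obj w N a b (l, u) <= s * V.
Proof.
move=> le_V l u s s_ge0 l_ge0 lu rows.
have objZ k : P5_obj w N a b (k * l, k * u) = k * P5_obj w N a b (l, u).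
  by rewrite /P5_obj /=; ring.
have feasZ k : 0 <= k -> k * s <= 1 -> P5_feasible m w (k * l, k * u).
  move=> k_ge0 ks; split=> /= [i im||]; rewrite ?mulr_ge0 ?ler_wpM2l //.
  rewrite (le_trans _ ks) // (_ : _ + _ = k * (w i.+1 * l + (1 - w i) * u)); last by ring.
  by rewrite ler_wpM2l ?rows.
have [s_gt0|] := ltrP 0 s.
  have feas : P5_feasible m w (s^-1 * l, s^-1 * u).
    by apply: feasZ; rewrite ?invr_ge0 ?mulVf ?gt_eqF.
  by have := le_V _ feas; rewrite objZ ler_pdivrMl.
rewrite le_eqVlt ltNge s_ge0 orbF => /eqP s0; rewrite s0 mul0r.
rewrite leNgt; apply/negP => obj_gt0.
pose k := (`|V| + 1) / P5_obj w N a b (l, u).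
have k_ge0 : 0 <= k by apply: divr_ge0; [exact: addr_ge0 (normr_ge0 V) ler01 | exact: ltW].
have feas : P5_feasible m w (k * l, k * u) by apply: feasZ; rewrite // s0 mulr0.
have := le_V _ feas; rewrite objZ mulfVK ?gt_eqF //; apply/negP; rewrite -ltNge.
by apply: le_lt_trans (ler_norm V) _; rewrite ltrDl.
Qed.

Lemma pair_gain_sum (tx ty : {perm 'I_m}) (i : nat) :
  (tx b : nat) = i -> (ty b : nat) = 0%N ->
  \sum_(c | c != b) (sg tx c - w i + 1 - sg ty c) = m%:R * (1 - w i).
Proof.
move=> txb tyb; rewrite sum_neq_b; last by rewrite /sigma txb tyb w0; ring.
rewrite sumrB big_split sumrB /= !sumr_const card_ord !sum_sigma -[w i *+ m]mulr_natl.
ring.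
Qed.

Lemma pair_gain_ge0 (tx ty : {perm 'I_m}) (i : nat) c : (i < m)%N ->
  ty c = tx c \/ (tx c : nat) = 0%N -> 0 <= sg tx c - w i + 1 - sg ty c.
Proof.
rewrite /sigma => im [->|txc]; have := w_le1 im; first lra.
by rewrite txc w0; have := w_le1 (ltn_ord (ty c)); lra.
Qed.

Section DualPoint.
Variables (pi : 'I_m -> R) (nu s : R) (c0 : 'I_m).
Hypotheses (c0b : c0 != b) (pi_min : forall c, c != b -> pi c0 <= pi c).

Lemma dual_point_obj : \sum_(c | c != b) pi c * (sc c - sc b) <=
  P5_obj w N a b (pi a - pi c0, pi a + (m%:R - 1) * pi c0).
Proof.
have ab : a != b by rewrite eq_sym.
have others : \sum_(c | (c != b) && (c != a)) pi c * (sc c - sc b) <=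
    pi c0 * (m%:R * (nwbar - sc b) - (sc a - sc b)).
  have -> : m%:R * (nwbar - sc b) - (sc a - sc b) =
      \sum_(c | (c != b) && (c != a)) (sc c - sc b).
    by rewrite -sum_score_gap (bigD1 a) //= addrAC subrr add0r.
  rewrite mulr_sumr; apply: ler_sum => c /andP[cb ca]; rewrite ler_wnM2r ?pi_min //.
  by rewrite subr_le0 b_second.
rewrite (bigD1 a) //= /P5_obj /=; lra.
Qed.

Hypotheses
  (Tba_row : forall t, t \in Tba a b ->
     \sum_(c | c != b) pi c * (sg t c - sg t b) <= nu + s)
  (Tb_row : forall t, t \in Tb b ->
     \sum_(c | c != b) pi c * (1 - sg t c) + nu <= 0).

Lemma dual_point_feasible i : (i < m.-1)%N ->
  w i.+1 * (pi a - pi c0) + (1 - w i) * (pi a + (m%:R - 1) * pi c0) <= s.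
Proof.
move=> im; have ab : a != b by rewrite eq_sym.
have [|tx [ty [txb txa tyb tya tx_ty]]] := ranking_pair ab c0b (i := i); first lia.
have txT : tx \in Tba a b by rewrite unfold_in /Tba txa txb.
have tyT : ty \in Tb b by rewrite unfold_in /Tb tyb.
pose G c := sg tx c - w i + 1 - sg ty c.
(* The two rows add up to [\sum pi c * G c <= s]; splitting [pi c] as
   [pi c0 + (pi c - pi c0)], all gains [G c] are nonnegative except at [a]
   and [c0], and [pi c - pi c0] vanishes at [c0]. *)
have sum_piG : \sum_(c | c != b) pi c * G c <= s.
  have := lerD (Tba_row txT) (Tb_row tyT); rewrite addrA -big_split /=.
  rewrite (eq_bigr (fun c => pi c * G c)) => [|c _]; first lra.
  by rewrite /G /sigma txb; ring.
have split_min : \sum_(c | c != b) pi c * G c =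
    pi c0 * (m%:R * (1 - w i)) + \sum_(c | c != b) (pi c - pi c0) * G c.
  rewrite -(pair_gain_sum txb tyb) mulr_sumr -big_split /=.
  by apply: eq_bigr => c _; rewrite /G; ring.
have gain_a :
    (pi a - pi c0) * (1 - w i + w i.+1) <= \sum_(c | c != b) (pi c - pi c0) * G c.
  rewrite (bigD1 a) //= -[leLHS]addr0 lerD //.
    have [->|c0a] := eqVneq c0 a; first by rewrite !subrr !mul0r.
    by rewrite /G /sigma txa (tya c0a) w_last le_eqVlt; apply/predU1P; left; ring.
  apply: sumr_ge0 => c /andP[cb ca].
  have [->|cc0] := eqVneq c c0; first by rewrite subrr mul0r.
  by apply: mulr_ge0; [rewrite subr_ge0 pi_min | apply: pair_gain_ge0; [lia | exact: tx_ty]].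
have -> : w i.+1 * (pi a - pi c0) + (1 - w i) * (pi a + (m%:R - 1) * pi c0) =
    pi c0 * (m%:R * (1 - w i)) + (pi a - pi c0) * (1 - w i + w i.+1) by ring.
lra.
Qed.
End DualPoint.

(* (P2) in the form [M xy >= r, xy >= 0] over the variables [xy = (x, y)];
   the two rows [inr e] encode the equality [\sum y = \sum x]. *)
Definition P2_matrix (k : 'I_m + bool) (j : {perm 'I_m} + {perm 'I_m}) : R :=
  match k, j with
  | inl c, inl t => if (c != b) && (t \in Tba a b) then sg t c - sg t b else 0
  | inl c, inr t => if (c != b) && (t \in Tb b) then 1 - sg t c else 0
  | inr e, inl t => if t \in Tba a b then (-1) ^+ e else 0
  | inr e, inr t => if t \in Tb b then - (-1) ^+ e else 0
  end.

Definition P2_rhs (k : 'I_m + bool) : R :=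
  if k is inl c then (if c != b then sc c - sc b else 0) else 0.

Definition P2_cost (j : {perm 'I_m} + {perm 'I_m}) : R :=
  if j is inl t then (if t \in Tba a b then 1 else 0) else 0.

Lemma P2_of_matrix (xy : {perm 'I_m} + {perm 'I_m} -> R) :
  (forall j, 0 <= xy j) -> (forall k, P2_rhs k <= \sum_j P2_matrix k j * xy j) ->
  P2_feasible w N a b (xy \o inl, xy \o inr) /\
  P2_obj a b (xy \o inl, xy \o inr) = \sum_j P2_cost j * xy j.
Proof.
move=> xy_ge0 rows; split; last first.
  rewrite big_sumType /= sum_if_mulr [X in _ + X]big1 ?addr0 => [|t _]; last exact: mul0r.
  by under [RHS]eq_bigr do rewrite mul1r.
split=> /= [c cb||t _|t _]; rewrite ?xy_ge0 //.
  have := rows (inl c); rewrite /= big_sumType /= cb /= !sum_if_mulr.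
  suff -> : \sum_(t in Tb b) xy (inr t) * (1 - sg t c) -
      \sum_(t in Tba a b) xy (inl t) * (sg t b - sg t c) =
      \sum_(t in Tba a b) (sg t c - sg t b) * xy (inl t) +
      \sum_(t in Tb b) (1 - sg t c) * xy (inr t) by [].
  by rewrite addrC -sumrN; congr (_ + _); apply: eq_bigr => t _; ring.
have := rows (inr true); have := rows (inr false).
rewrite /= !big_sumType /= !sum_if_mulr expr0 expr1 -!mulr_sumr; lra.
Qed.

Lemma P2_matrix_dual_le (V : R) (p : 'I_m + bool -> R) (q : R) :
  (forall q, P5_feasible m w q -> P5_obj w N a b q <= V) ->
  (forall k, 0 <= p k) -> 0 <= q ->
  (forall j, \sum_k p k * P2_matrix k j <= q * P2_cost j) ->
  \sum_k p k * P2_rhs k <= q * V.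
Proof.
move=> le_V p_ge0 q_ge0 cols.
rewrite big_sumType /= [X in _ + X]big1 ?addr0 => [|e _]; last exact: mulr0.
rewrite sum_mulr_if.
pose pi c := p (inl c); pose nu := p (inr true) - p (inr false).
have [c0 c0b pi_min] : exists2 c0, c0 != b & forall c, c != b -> pi c0 <= pi c.
  have ab : a != b by rewrite eq_sym.
  by case: (@arg_minP _ _ _ a (fun c => c != b) pi ab) => c0; exists c0.
have Tba_row t : t \in Tba a b -> \sum_(c | c != b) pi c * (sg t c - sg t b) <= nu + q.
  move=> tT; have := cols (inl t); rewrite /= big_sumType big_bool /= tT mulr1.
  under eq_bigr do rewrite andbT; rewrite sum_mulr_if expr1 mulr1 /pi /nu; lra.
have Tb_row t : t \in Tb b -> \sum_(c | c != b) pi c * (1 - sg t c) + nu <= 0.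
  move=> tT; have := cols (inr t); rewrite /= big_sumType big_bool /= tT mulr0.
  under eq_bigr do rewrite andbT; rewrite sum_mulr_if expr1 expr0 /pi /nu; lra.
have l_ge0 : 0 <= pi a - pi c0 by rewrite subr_ge0 pi_min // eq_sym.
have lu : pi a - pi c0 <= pi a + (m%:R - 1) * pi c0.
  have m_ge1 : (1 : R) <= m%:R by rewrite ler1n m_gt0.
  by have := p_ge0 (inl c0); rewrite /pi; nra.
have := P5_obj_le_homogeneous le_V q_ge0 l_ge0 lu
  (dual_point_feasible c0b pi_min Tba_row Tb_row).
have := dual_point_obj pi_min; rewrite /pi; lra.
Qed.

Lemma P2_attains_P5_bound (V : R) :
  (forall q, P5_feasible m w q -> P5_obj w N a b q <= V) ->
  exists2 p, P2_feasible w N a b p & P2_obj a b p <= V.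
Proof.
move=> le_V.
have [[xy [xy_ge0 rows obj]]|[p [q [p_ge0 q_ge0 cols pr]]]] :=
  farkas_lp P2_matrix P2_rhs P2_cost V.
  have [feas obj_eq] := P2_of_matrix xy_ge0 rows.
  by exists (xy \o inl, xy \o inr); rewrite ?obj_eq.
by have := P2_matrix_dual_le le_V p_ge0 q_ge0 cols; lra.
Qed.
End Voting.

Theorem theorem11 (R : realType) (m : nat) (w : nat -> R)
  (N : {perm 'I_m} -> nat) (a b : 'I_m) :
  (3 <= m)%N ->
  w 0%N = 1 -> w m.-1 = 0 ->
  (forall i j : nat, (i <= j)%N -> (j < m)%N -> w j <= w i) ->
  (forall c : 'I_m, c != a -> score w N c < score w N a) ->
  b != a ->
  (forall c : 'I_m, c != a -> score w N c <= score w N b) ->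
  [/\ P2_value w N a b = P5_value w N a b,
      P4_value w N a b = P5_value w N a b &
      (P5_unbounded w N a b <->
        (~ (exists p, P2_feasible w N a b p) /\
         ~ (exists z, P4_feasible w N a b z)))].
Proof.
move=> _ w0 w_last w_nonincr _ ba b_second.
have weak2 := P5_obj_le_P2_obj (N := N) w0 w_last w_nonincr ba.
have weak4 := @P5_obj_le_P4_obj R m w N a b.
have [unb|bdd] := pselect (P5_unbounded w N a b).
  have [no2 val2] := ereal_inf_eq_sup_unbounded weak2 unb.
  have [no4 val4] := ereal_inf_eq_sup_unbounded weak4 unb.
  by split=> //; split.
have [|v [val5 le_v]] := ereal_sup_real _ bdd.
  by exists (0, 0); split=> //= i _; rewrite !mulr0 addr0.
have [p2 feas2 obj2] := P2_attains_P5_bound w0 w_last w_nonincr ba b_second le_v.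
have [feas4 obj4] := P2_to_P4 w0 w_last w_nonincr ba feas2.
rewrite /P2_value /P4_value /P5_value; split.
- by apply: (ereal_inf_eq_sup_attained weak2 val5); exists p2.
- by apply: (ereal_inf_eq_sup_attained weak4 val5); exists (P4_of_P2 a b p2.1); rewrite ?obj4.
- by split=> [/bdd|[no2 _]] //; case: no2; exists p2.
Qed.
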